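(* Let $E$ be an imaginary quadratic field with ring of integers $\mathfrak{o}_E$ and fundamental discriminant $\Delta_E$, and let $\iota\in\mathrm{Emb}(\mathfrak{o}_E,\mathcal{O})$. Then $\iota(\mathfrak{o}_E)=\iota(E)\cap\mathcal{O}$, and there exists an element $a\in\iota(E)\cap V_D$ with $\mathrm{Nm}(a)=-\Delta_E$. Moreover, any such element $a$ belongs to $\iota(E)\cap L(\mathcal{O})$, and $\mathbb{Z}a=\iota(E)\cap L(\mathcal{O})$.
   Context: $D$ is a definite quaternion algebra over $\mathbb{Q}$ with standard involution $\sigma$, reduced norm $\mathrm{Nm}(x)=x\sigma(x)$, trace $\mathrm{Tr}(x)=x+\sigma(x)$; $\mathcal{O}$ is an Eichler order in $D$. $V_D=\{x\in D:\mathrm{Tr}(x)=0\}$ and $L(\mathcal{O})=\{x\in\mathbb{Z}+2\mathcal{O}:\mathrm{Tr}(x)=0\}$. An embedding $E\hookrightarrow D$ is an injective $\mathbb{Q}$-algebra homomorphism; $\mathrm{Emb}(\mathfrak{o}_E,\mathcal{O})$ (optimal embeddings) is the set of embeddings $\iota:E\hookrightarrow D$ such that $\iota(E)\cap\mathcal{O}$ is isomorphic to $\mathfrak{o}_E$ as a ring. *)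

From mathcomp Require Import all_boot all_order all_algebra.
Set Implicit Arguments. Unset Strict Implicit. Unset Printing Implicit Defensive.
Import Order.TTheory GRing.Theory Num.Theory.
Local Open Scope ring_scope.

(* Quaternion algebra D = (qa, qb)_Q over Q : basis 1, i, j, k = ij,   *)
(* i^2 = qa, j^2 = qb, ij = -ji.  It is definite iff qa < 0 and qb < 0. *)
(* Every quaternion algebra over Q is of this form.                    *)
Record quat := Quat { q0 : rat; q1 : rat; q2 : rat; q3 : rat }.

Definition qadd (x y : quat) : quat :=
  Quat (q0 x + q0 y) (q1 x + q1 y) (q2 x + q2 y) (q3 x + q3 y).

Definition qscale (c : rat) (x : quat) : quat :=
  Quat (c * q0 x) (c * q1 x) (c * q2 x) (c * q3 x).

Definition qscal (c : rat) : quat := Quat c 0 0 0.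

Definition qone : quat := qscal 1.

Definition qmul (qa qb : rat) (x y : quat) : quat :=
  Quat (q0 x * q0 y + qa * q1 x * q1 y + qb * q2 x * q2 y - qa * qb * q3 x * q3 y)
       (q0 x * q1 y + q1 x * q0 y - qb * q2 x * q3 y + qb * q3 x * q2 y)
       (q0 x * q2 y + q2 x * q0 y + qa * q1 x * q3 y - qa * q3 x * q1 y)
       (q0 x * q3 y + q3 x * q0 y + q1 x * q2 y - q2 x * q1 y).

Definition qconj (x : quat) : quat := Quat (q0 x) (- q1 x) (- q2 x) (- q3 x).

(* reduced trace Tr(x) = x + sigma(x) and reduced norm Nm(x) = x sigma(x),
   both as elements of D (they lie in Q = Q.1) *)
Definition qTr (x : quat) : quat := qadd x (qconj x).
Definition qNm (qa qb : rat) (x : quat) : quat := qmul qa qb x (qconj x).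

Definition in_VD (x : quat) : Prop := qTr x = qscal 0.

Definition zcomb (z0 z1 z2 z3 : int) (e0 e1 e2 e3 : quat) : quat :=
  qadd (qadd (qscale z0%:~R e0) (qscale z1%:~R e1))
       (qadd (qscale z2%:~R e2) (qscale z3%:~R e3)).

Definition qcomb (c0 c1 c2 c3 : rat) (e0 e1 e2 e3 : quat) : quat :=
  qadd (qadd (qscale c0 e0) (qscale c1 e1)) (qadd (qscale c2 e2) (qscale c3 e3)).

Definition is_full_lattice (O : quat -> Prop) : Prop :=
  exists e0 e1 e2 e3 : quat,
    (forall x, O x <-> exists z0 z1 z2 z3 : int, x = zcomb z0 z1 z2 z3 e0 e1 e2 e3)
    /\ (forall x : quat, exists c0 c1 c2 c3 : rat, x = qcomb c0 c1 c2 c3 e0 e1 e2 e3).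

Definition is_order (qa qb : rat) (O : quat -> Prop) : Prop :=
  is_full_lattice O /\ O qone /\ (forall x y, O x -> O y -> O (qmul qa qb x y)).

Definition is_maximal_order (qa qb : rat) (O : quat -> Prop) : Prop :=
  is_order qa qb O /\
  (forall O' : quat -> Prop, is_order qa qb O' -> (forall x, O x -> O' x) ->
     forall x, O' x -> O x).

Definition is_Eichler_order (qa qb : rat) (O : quat -> Prop) : Prop :=
  exists O1 O2 : quat -> Prop,
    is_maximal_order qa qb O1 /\ is_maximal_order qa qb O2 /\
    (forall x, O x <-> O1 x /\ O2 x).

Definition in_LO (O : quat -> Prop) (x : quat) : Prop :=
  (exists (n : int) (y : quat), O y /\ x = qadd (qscal n%:~R) (qscale 2 y))
  /\ in_VD x.

(* Imaginary quadratic field E = Q(sqrt d), d squarefree negative int. *)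
(* An element QF p q stands for p + q sqrt d.                          *)
Record qf := QF { qre : rat; qim : rat }.

Definition squarefree_int (d : int) : Prop :=
  forall n : nat, (n ^ 2 %| `|d|)%N -> n = 1%N.

Definition imag_quadratic (d : int) : Prop := d < 0 /\ squarefree_int d.

Definition eadd (x y : qf) : qf := QF (qre x + qre y) (qim x + qim y).
Definition emul (d : int) (x y : qf) : qf :=
  QF (qre x * qre y + d%:~R * qim x * qim y) (qre x * qim y + qim x * qre y).
Definition escale (c : rat) (x : qf) : qf := QF (c * qre x) (c * qim x).
Definition eone : qf := QF 1 0.
Definition ezero : qf := QF 0 0.
Definition eint (n : int) : qf := QF n%:~R 0.

Fixpoint eexp (d : int) (x : qf) (n : nat) : qf :=
  match n with 0%N => eone | n'.+1 => emul d x (eexp d x n') end.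

(* value at x of the monic integer polynomial X^(size cs) + sum_i cs_i X^i *)
Definition emonic_eval (d : int) (cs : seq int) (x : qf) : qf :=
  eadd (eexp d x (size cs))
       (foldr eadd ezero [seq emul d (eint (nth 0 cs i)) (eexp d x i) | i <- iota 0 (size cs)]).

Definition in_oE (d : int) (x : qf) : Prop :=
  exists cs : seq int, emonic_eval d cs x = ezero.

Definition eTr (x : qf) : rat := 2 * qre x.

Definition is_fund_disc (d : int) (Delta : int) : Prop :=
  exists w1 w2 : qf,
    (forall x, in_oE d x <-> exists m n : int, x = eadd (escale m%:~R w1) (escale n%:~R w2))
    /\ Delta%:~R = eTr (emul d w1 w1) * eTr (emul d w2 w2) - eTr (emul d w1 w2) ^+ 2.

Definition is_embedding (qa qb : rat) (d : int) (iota : qf -> quat) : Prop :=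
  injective iota /\
  (forall x y, iota (eadd x y) = qadd (iota x) (iota y)) /\
  (forall x y, iota (emul d x y) = qmul qa qb (iota x) (iota y)) /\
  (forall (c : rat) x, iota (escale c x) = qscale c (iota x)) /\
  iota eone = qone.

Definition in_image (iota : qf -> quat) (z : quat) : Prop := exists y, iota y = z.

Definition is_optimal_embedding (qa qb : rat) (d : int) (O : quat -> Prop)
    (iota : qf -> quat) : Prop :=
  is_embedding qa qb d iota /\
  exists f : qf -> quat,
    (forall x, in_oE d x -> in_image iota (f x) /\ O (f x)) /\
    (forall x y, in_oE d x -> in_oE d y -> f x = f y -> x = y) /\
    (forall z, in_image iota z -> O z -> exists x, in_oE d x /\ f x = z) /\
    (forall x y, in_oE d x -> in_oE d y -> f (eadd x y) = qadd (f x) (f y)) /\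
    (forall x y, in_oE d x -> in_oE d y -> f (emul d x y) = qmul qa qb (f x) (f y)) /\
    f eone = qone.

From mathcomp Require Import all_boot all_order all_algebra all_field.
From mathcomp Require Import zify ring lra.
Import Order.TTheory GRing.Theory Num.Theory.
Local Open Scope ring_scope.
Set Implicit Arguments. Unset Strict Implicit.

(* Let omega be the standard generator of o_E = Z[omega]: (1 + sqrt d)/2 if
   d = 1 mod 4, and sqrt d otherwise.  Membership in o_E amounts to integral
   trace and norm, these being the sum and product of the two complex images
   of an element.  The isomorphism f : o_E -> iota(E) /\ O given by optimality
   satisfies f(u + v omega) = u + v f(omega), and f(omega) = iota(t) with t a
   root of the minimal polynomial of omega, i.e. omega or its conjugate; since
   o_E is stable under conjugation, f and iota have the same image on o_E.
   The trace-zero elements of iota(E) are the iota(r sqrt d), of norm -d r^2,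
   and comparing Z-bases of o_E gives Delta_E = 4 d Im(omega)^2, so the
   elements of norm -Delta_E are +-iota(2 omega - Tr omega), which lie in
   Z + 2 iota(o_E).  Conversely, a trace-zero n + 2 iota(u + v omega) equals
   v iota(2 omega - Tr omega). *)

Lemma qf_ext (x y : qf) : qre x = qre y -> qim x = qim y -> x = y.
Proof. by case: x => ? ?; case: y => ? ? /= -> ->. Qed.

Section QuadraticField.
Variable d : int.

Definition enorm (x : qf) : rat := qre x ^+ 2 - d%:~R * qim x ^+ 2.
Definition econj (x : qf) : qf := QF (qre x) (- qim x).
Definition ecomb (a b : rat) (x y : qf) : qf := eadd (escale a x) (escale b y).

Lemma emul_sqr x : emul d x x = ecomb (- enorm x) (eTr x) eone x.
Proof. by apply: qf_ext; rewrite /= /enorm /eTr; ring. Qed.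

Lemma eTr_ecomb1 a b x : eTr (ecomb a b eone x) = 2 * a + b * eTr x.
Proof. by rewrite /eTr /=; ring. Qed.

Lemma enorm_ecomb1 a b x :
  enorm (ecomb a b eone x) = a ^+ 2 + a * b * eTr x + b ^+ 2 * enorm x.
Proof. by rewrite /enorm /eTr /=; ring. Qed.

Lemma econjK : involutive econj.
Proof. by case=> p q; rewrite /econj /= opprK. Qed.

Lemma econj_ecomb1 a b x : econj (ecomb a b eone x) = ecomb a b eone (econj x).
Proof. by apply: qf_ext => /=; ring. Qed.

Section AlgebraicIntegers.
Variable s : algC.
Hypothesis sqr_s : s ^+ 2 = d%:~R.

Definition qf_algC (x : qf) : algC := ratr (qre x) + ratr (qim x) * s.

Lemma qf_algC_add x y : qf_algC (eadd x y) = qf_algC x + qf_algC y.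
Proof. by rewrite /qf_algC /= !rmorphD /=; ring. Qed.

Lemma qf_algC_mul x y : qf_algC (emul d x y) = qf_algC x * qf_algC y.
Proof. by rewrite /qf_algC /= !rmorphD !rmorphM /= rmorph_int -sqr_s; ring. Qed.

Lemma qf_algC_int n : qf_algC (eint n) = n%:~R.
Proof. by rewrite /qf_algC /= rmorph_int rmorph0 mul0r addr0. Qed.

Lemma qf_algC_exp x n : qf_algC (eexp d x n) = qf_algC x ^+ n.
Proof.
elim: n => [|n IHn] /=; first by rewrite (qf_algC_int 1) expr0.
by rewrite qf_algC_mul IHn exprS.
Qed.

Lemma qf_algC_Aint x : in_oE d x -> qf_algC x \in Aint.
Proof.
case=> cs /(congr1 qf_algC); rewrite (qf_algC_int 0) qf_algC_add qf_algC_exp.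
set n := size cs.
have -> : forall l, qf_algC (foldr eadd ezero l) = \sum_(y <- l) qf_algC y.
  elim=> [|y l IHl] /=; first by rewrite big_nil (qf_algC_int 0).
  by rewrite big_cons qf_algC_add IHl.
have -> : iota 0 n = index_iota 0 n by rewrite /index_iota subn0.
rewrite big_map big_mkord => root_x.
pose p : {poly algC} := 'X^n + \poly_(i < n) (cs`_i)%:~R.
apply: (@root_monic_Aint p).
- apply/eqP; rewrite hornerD hornerXn horner_poly -[RHS]root_x; congr (_ + _).
  by apply: eq_bigr => i _; rewrite qf_algC_mul qf_algC_int qf_algC_exp.
- by rewrite monicE lead_coefDl ?lead_coefXn // size_polyXn ltnS size_poly.
- apply/polyOverP => i; rewrite coefD coefXn coef_poly.
  by apply: rpredD; [exact: rpred_nat | case: ifP; rewrite ?rpred_int ?rpred0].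
Qed.

End AlgebraicIntegers.

Lemma in_oEE x : in_oE d x <-> eTr x \is a Num.int /\ enorm x \is a Num.int.
Proof.
split=> [x_oE | [/intrP[T eT] /intrP[N eN]]]; last first.
  exists [:: N; - T]; apply: qf_ext; rewrite /= intrN -eT -eN /eTr /enorm; ring.
set s : algC := sqrtC d%:~R.
have sqr_s : s ^+ 2 = d%:~R by rewrite sqrtCK.
have sqr_opp_s : (- s) ^+ 2 = d%:~R by rewrite sqrrN.
have x1 := qf_algC_Aint sqr_s x_oE; have x2 := qf_algC_Aint sqr_opp_s x_oE.
split; rewrite -Cint_rat; apply: Cint_rat_Aint; rewrite ?Crat_rat //.
- have -> : ratr (eTr x) = qf_algC s x + qf_algC (- s) x.
    by rewrite /qf_algC /eTr rmorphM /= rmorph_nat; ring.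
  exact: rpredD.
- have -> : ratr (enorm x) = qf_algC s x * qf_algC (- s) x.
    by rewrite /qf_algC /enorm rmorphB rmorphM !rmorphXn /= rmorph_int -sqr_s; ring.
  exact: rpredM.
Qed.

End QuadraticField.

Lemma intz_divmod2 (T : int) : exists a r, T = 2 * a + r /\ (r = 0 \/ r = 1).
Proof. exists (T %/ 2)%Z, (T %% 2)%Z; lia. Qed.

Lemma sqr_diff_mod4_1 (d T Q N : int) :
  (d %% 4)%Z = 1 -> T ^+ 2 - d * Q ^+ 2 = 4 * N -> exists k, T = Q + 2 * k.
Proof.
move=> d1; rewrite !expr2 => eq4.
have [j dj] : exists j, d = 4 * j + 1 by exists (d %/ 4)%Z; lia.
have [a [r [eT r01]]] := intz_divmod2 T; have [b [r' [eQ r'01]]] := intz_divmod2 Q.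
exists (a - b); rewrite eT eQ dj in eq4 *.
by case: r01 r'01 => ? [] ?; subst r r'; lia.
Qed.

Lemma sqr_diff_mod4_23 (d T Q N : int) :
  (d %% 4 = 2 \/ d %% 4 = 3)%Z -> T ^+ 2 - d * Q ^+ 2 = 4 * N ->
  exists a b, T = 2 * a /\ Q = 2 * b.
Proof.
move=> d23; rewrite !expr2 => eq4.
have [j [m [dj m23]]] : exists j m, d = 4 * j + m /\ (m = 2 \/ m = 3).
  by exists (d %/ 4)%Z, (d %% 4)%Z; lia.
have [a [r [eT r01]]] := intz_divmod2 T; have [b [r' [eQ r'01]]] := intz_divmod2 Q.
exists a, b; rewrite eT eQ dj in eq4 *.
by case: r01 r'01 m23 => ? [] ? [] ?; subst r r' m; lia.
Qed.

Lemma squarefree_int_sqr d (r : rat) :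
  squarefree_int d -> d%:~R * r ^+ 2 \is a Num.int -> r \is a Num.int.
Proof.
move=> d_sqf /intrP[K eK].
have eqZ : d * numq r ^+ 2 = K * denq r ^+ 2.
  by apply: (@intr_inj rat); rewrite !expr2 !intrM numqE -eK; ring.
have den_dvd : (`|denq r| ^ 2 %| `|d| * `|numq r| ^ 2)%N.
  by rewrite -!abszX -abszM eqZ abszM abszX dvdn_mull.
rewrite Gauss_dvdl in den_dvd; last first.
  by apply/coprimeXl/coprimeXr; rewrite coprime_sym coprime_num_den.
have := d_sqf _ den_dvd; have := denq_gt0 r.
by rewrite Qint_def; move=> ? ?; apply/eqP; lia.
Qed.

Lemma squarefree_modz4_neq0 d : squarefree_int d -> (d %% 4)%Z != 0.
Proof.
move=> d_sqf; apply/eqP => d0.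
have : (2 ^ 2 %| `|d|)%N by rewrite (divz_eq d 4) d0 addr0 abszM dvdn_mull.
by move/d_sqf.
Qed.

Definition omega (d : int) : qf :=
  if (d %% 4)%Z == 1 then QF (1 / 2) (1 / 2) else QF 0 1.

Lemma qim_omega_neq0 d : qim (omega d) != 0.
Proof. by rewrite /omega; case: ifP. Qed.

Lemma in_oE_omega d : in_oE d (omega d).
Proof.
apply/in_oEE; rewrite /omega /eTr /enorm; case: ifP => [/eqP d1 | _] /=.
  have d4 : d%:~R = 4 * (d %/ 4)%Z%:~R + 1 :> rat.
    by rewrite {1}(divz_eq d 4) d1 intrD intrM mulrC.
  have -> : 2 * (1 / 2) = 1 :> rat by field.
  have -> : (1 / 2) ^+ 2 - d%:~R * (1 / 2) ^+ 2 = (- (d %/ 4)%Z)%:~R :> rat.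
    by rewrite d4 intrN; field.
  by rewrite rpred1 rpred_int.
have -> : 0 ^+ 2 - d%:~R * 1 ^+ 2 = (- d)%:~R :> rat by rewrite intrN; ring.
by rewrite mulr0 rpred0 rpred_int.
Qed.

Lemma in_oE_ecomb1 d (u v : int) x :
  in_oE d x -> in_oE d (ecomb u%:~R v%:~R eone x).
Proof.
case/in_oEE=> /intrP[T eT] /intrP[N eN]; apply/in_oEE.
rewrite eTr_ecomb1 enorm_ecomb1 eT eN.
by split; rewrite ?(rpredD, rpredM, rpredX, rpred_int, rpred_nat).
Qed.

Lemma in_oE_omegaP d x : squarefree_int d ->
  in_oE d x <-> exists u v : int, x = ecomb u%:~R v%:~R eone (omega d).
Proof.
move=> d_sqf; split=> [|[u [v ->]]]; last exact/in_oE_ecomb1/in_oE_omega.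
case/in_oEE=> /intrP[T eT] /intrP[N eN].
have /intrP[Q eQ] : 2 * qim x \is a Num.int.
  apply: (squarefree_int_sqr d_sqf).
  have -> : d%:~R * (2 * qim x) ^+ 2 = (T ^+ 2 - 4 * N)%:~R.
    by rewrite intrB !expr2 !intrM -eT -eN /eTr /enorm; ring.
  exact: rpred_int.
have eq4 : T ^+ 2 - d * Q ^+ 2 = 4 * N.
  apply: (@intr_inj rat).
  by rewrite !expr2 !(intrB, intrM) -eT -eQ -eN /eTr /enorm; ring.
have d_mod4 := squarefree_modz4_neq0 d_sqf.
rewrite /omega; case: ifP => [/eqP d1 | /negbT d_not1].
  have [k eTk] := sqr_diff_mod4_1 d1 eq4.
  exists k, Q; apply: qf_ext => /=.
    have -> : qre x = T%:~R / 2 by rewrite -eT /eTr; field.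
    by rewrite eTk intrD intrM; field.
  by rewrite -eQ; field.
have [a [b [eTa eQb]]] : exists a b, T = 2 * a /\ Q = 2 * b.
  by apply: (sqr_diff_mod4_23 _ eq4); lia.
exists a, b; apply: qf_ext => /=.
  have -> : qre x = T%:~R / 2 by rewrite -eT /eTr; field.
  by rewrite eTa intrM; field.
have -> : qim x = Q%:~R / 2 by rewrite -eQ; field.
by rewrite eQb intrM; field.
Qed.

Lemma econj_in_oE d x : in_oE d x -> in_oE d (econj x).
Proof. by case/in_oEE=> Tx Nx; apply/in_oEE; rewrite /eTr /enorm /= sqrrN. Qed.

Lemma in_oE_intscale d (k : int) x : in_oE d x -> in_oE d (escale k%:~R x).
Proof.
case/in_oEE=> Tx Nx; apply/in_oEE.
have -> : eTr (escale k%:~R x) = k%:~R * eTr x by rewrite /eTr /=; ring.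
have -> : enorm d (escale k%:~R x) = k%:~R ^+ 2 * enorm d x by rewrite /enorm /=; ring.
by split; rewrite rpredM ?rpredX ?rpred_int.
Qed.

Lemma ezero_in_oE d : in_oE d ezero.
Proof. by apply/in_oEE; split; apply/intrP; exists 0; rewrite /eTr /enorm /=; ring. Qed.

Lemma eone_in_oE d : in_oE d eone.
Proof.
by apply/in_oEE; split; apply/intrP; [exists 2 | exists 1]; rewrite /eTr /enorm /=; ring.
Qed.

Lemma minpoly_root_eq d x w : d < 0 ->
  emul d x x = ecomb (- enorm d w) (eTr w) eone x -> x = w \/ x = econj w.
Proof.
move=> d_lt0; case: x w => a b [p q] /(congr1 (fun y => (qre y, qim y))) [].
rewrite /enorm /eTr /= => e_re e_im.
have d_neg : d%:~R < 0 :> rat by rewrite ltrz0.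
have [b0 | b_neq0] := eqVneq b 0.
  have a_p : (a - p) ^+ 2 = d%:~R * q ^+ 2 by move: e_re; rewrite b0; lra.
  have dq_le0 : d%:~R * q ^+ 2 <= 0 by rewrite nmulr_rle0 // sqr_ge0.
  have ap0 : (a - p) ^+ 2 = 0 by have := sqr_ge0 (a - p); lra.
  have /eqP : d%:~R * q ^+ 2 = 0 by rewrite -a_p.
  rewrite mulf_eq0 intr_eq0 (negPf (ltr0_neq0 d_lt0)) sqrf_eq0 => /eqP q0.
  move/eqP: ap0; rewrite sqrf_eq0 subr_eq0 => /eqP ap.
  by left; apply: qf_ext; rewrite /= ?b0.
have a_p : a = p by apply: (mulIf b_neq0); lra.
have : (b - q) * (b + q) = 0.
  by apply: (mulfI (ltr0_neq0 d_neg)); move: e_re; rewrite a_p; lra.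
move/eqP; rewrite mulf_eq0 => /orP[] /eqP b_q; [left | right];
  by apply: qf_ext => /=; lra.
Qed.

Definition edet (x y : qf) : rat := qre x * qim y - qim x * qre y.

Lemma disc_edet d x y :
  eTr (emul d x x) * eTr (emul d y y) - eTr (emul d x y) ^+ 2 =
  4 * d%:~R * edet x y ^+ 2.
Proof. by rewrite /eTr /edet /=; ring. Qed.

Lemma edet_ecomb a b c e x y :
  edet (ecomb a b x y) (ecomb c e x y) = (a * e - b * c) * edet x y.
Proof. by rewrite /edet /=; ring. Qed.

Lemma intz_mul_eq1 (a b : int) : a * b = 1 -> b ^+ 2 = 1.
Proof.
move/(congr1 absz); rewrite abszM => /eqP; rewrite muln_eq1 => /andP[_ /eqP b1].
by have [->|->] : b = 1 \/ b = -1 by lia.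
Qed.

Lemma fund_disc_omega d Delta : imag_quadratic d -> is_fund_disc d Delta ->
  Delta%:~R = 4 * d%:~R * qim (omega d) ^+ 2.
Proof.
case=> _ d_sqf [w1 [w2 [w_basis ->]]]; rewrite disc_edet.
have w1_oE : in_oE d w1 by apply/w_basis; exists 1, 0; apply: qf_ext => /=; ring.
have w2_oE : in_oE d w2 by apply/w_basis; exists 0, 1; apply: qf_ext => /=; ring.
have [u1 [v1 e1]] := (in_oE_omegaP w1 d_sqf).1 w1_oE.
have [u2 [v2 e2]] := (in_oE_omegaP w2 d_sqf).1 w2_oE.
have [m1 [n1 e1']] := (w_basis eone).1 (eone_in_oE d).
have [m2 [n2 e2']] := (w_basis (omega d)).1 (in_oE_omega d).
have det_1omega : edet eone (omega d) = qim (omega d) by rewrite /edet /=; ring.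
have det_w : edet w1 w2 = (u1 * v2 - v1 * u2)%:~R * qim (omega d).
  by rewrite e1 e2 edet_ecomb det_1omega intrB !intrM.
have det_1 : qim (omega d) = (m1 * n2 - n1 * m2)%:~R * edet w1 w2.
  by rewrite -det_1omega e2' e1' edet_ecomb intrB !intrM.
have /intz_mul_eq1 unit_det : (m1 * n2 - n1 * m2) * (u1 * v2 - v1 * u2) = 1.
  apply: (@intr_inj rat); apply: (mulIf (qim_omega_neq0 d)).
  by rewrite intrM mul1r -mulrA -det_w -det_1.
by rewrite det_w exprMn expr2 -intrM -expr2 unit_det mul1r.
Qed.

Lemma quat_ext (x y : quat) :
  q0 x = q0 y -> q1 x = q1 y -> q2 x = q2 y -> q3 x = q3 y -> x = y.
Proof. by case: x => ? ? ? ?; case: y => ? ? ? ? /= -> -> -> ->. Qed.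

Lemma quat_eqP (x y : quat) :
  x = y <-> [/\ q0 x = q0 y, q1 x = q1 y, q2 x = q2 y & q3 x = q3 y].
Proof. by split=> [-> // | [] ]; apply: quat_ext. Qed.

Lemma qscale_qone c : qscale c qone = qscal c.
Proof. by apply: quat_ext => /=; ring. Qed.

Lemma qscaleA a b x : qscale a (qscale b x) = qscale (a * b) x.
Proof. by apply: quat_ext => /=; ring. Qed.

Lemma qadd_eq0 x y : qadd x y = qscal 0 -> x = qscale (-1) y.
Proof.
by case/quat_eqP => /= e0 e1 e2 e3; apply: quat_ext => /=; lra.
Qed.

Section Embedding.
Variables (qa qb : rat) (d : int) (iota : qf -> quat).
Hypothesis d_lt0 : d < 0.
Hypothesis iota_emb : is_embedding qa qb d iota.

Lemma iota_ecomb a b x y :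
  iota (ecomb a b x y) = qadd (qscale a (iota x)) (qscale b (iota y)).
Proof. by case: iota_emb => _ [iotaD [_ [iotaZ _]]]; rewrite iotaD !iotaZ. Qed.

Let Y := iota (QF 0 1).

Lemma iota_QF p q : iota (QF p q) = qadd (qscal p) (qscale q Y).
Proof.
case: iota_emb => _ [_ [_ [_ iota1]]].
rewrite -qscale_qone -iota1 -iota_ecomb; congr iota.
by apply: qf_ext => /=; ring.
Qed.

(* [Y] squares to [d < 0], so it cannot have a nonzero real part. *)
Lemma iota_sqrt :
  q0 Y = 0 /\ qa * q1 Y ^+ 2 + qb * q2 Y ^+ 2 - qa * qb * q3 Y ^+ 2 = d%:~R.
Proof.
case: iota_emb => _ [_ [iotaM _]].
have := iotaM (QF 0 1) (QF 0 1).
have -> : emul d (QF 0 1) (QF 0 1) = QF d%:~R 0 by apply: qf_ext => /=; ring.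
rewrite iota_QF -/Y => /quat_eqP[] /=.
set y0 := q0 Y; set y1 := q1 Y; set y2 := q2 Y; set y3 := q3 Y => e0 e1 e2 e3.
have d_neg : d%:~R < 0 :> rat by rewrite ltrz0.
have [y00 | y0_neq0] := eqVneq y0 0.
  by split=> //; move: e0; rewrite y00; lra.
exfalso.
have y1_0 : y1 = 0 by apply: (mulfI y0_neq0); lra.
have y2_0 : y2 = 0 by apply: (mulfI y0_neq0); lra.
have y3_0 : y3 = 0 by apply: (mulfI y0_neq0); lra.
move: e0; rewrite y1_0 y2_0 y3_0; have := sqr_ge0 y0; rewrite expr2; lra.
Qed.

Lemma iotaE p q : iota (QF p q) = Quat p (q * q1 Y) (q * q2 Y) (q * q3 Y).
Proof. by rewrite iota_QF; apply: quat_ext; rewrite /= ?iota_sqrt.1; ring. Qed.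

Lemma iota_scale c x : iota (escale c x) = qscale c (iota x).
Proof. by case: iota_emb => _ [_ [_ []]]. Qed.

Lemma iota_ecomb1 a b x : iota (ecomb a b eone x) = qadd (qscal a) (qscale b (iota x)).
Proof.
by case: iota_emb => _ [_ [_ [_ iota1]]]; rewrite iota_ecomb iota1 qscale_qone.
Qed.

Lemma in_VD_iota x : in_VD (iota x) <-> qre x = 0.
Proof.
case: x => p q; rewrite /in_VD /qTr iotaE.
split=> [/(congr1 q0) /= | /= ->]; first lra.
by apply: quat_ext => /=; ring.
Qed.

Lemma qNm_iota x : qNm qa qb (iota x) = qscal (enorm d x).
Proof.
case: x => p q; rewrite iotaE /qNm /enorm -iota_sqrt.2.
by apply: quat_ext => /=; ring.
Qed.

Lemma in_VD_qNm_eq w a : qre w = 0 -> in_image iota a -> in_VD a ->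
  qNm qa qb a = qNm qa qb (iota w) ->
  exists2 s : int, s ^+ 2 = 1 & a = qscale s%:~R (iota w).
Proof.
move=> re_w [e <-] /in_VD_iota re_e; rewrite !qNm_iota => /(congr1 q0) /=.
rewrite /enorm re_w re_e => e_norm.
have d_neq0 : d%:~R != 0 :> rat by rewrite intr_eq0 ltr0_neq0.
have /eqP : (qim e - qim w) * (qim e + qim w) = 0 by apply: (mulfI d_neq0); lra.
rewrite mulf_eq0 => /orP[] /eqP im_e; [exists 1 | exists (-1)] => //;
  by rewrite -iota_scale; congr iota; apply: qf_ext; rewrite /= ?re_e ?re_w; lra.
Qed.

End Embedding.

Section OptimalEmbedding.
Variables (qa qb : rat) (O : quat -> Prop) (d : int) (iota f : qf -> quat).
Hypothesis d_imag : imag_quadratic d.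
Hypothesis iota_emb : is_embedding qa qb d iota.
Hypothesis f_oE : forall x, in_oE d x -> in_image iota (f x) /\ O (f x).
Hypothesis f_onto : forall z, in_image iota z -> O z -> exists x, in_oE d x /\ f x = z.
Hypothesis fD : forall x y, in_oE d x -> in_oE d y -> f (eadd x y) = qadd (f x) (f y).
Hypothesis fM :
  forall x y, in_oE d x -> in_oE d y -> f (emul d x y) = qmul qa qb (f x) (f y).
Hypothesis f1 : f eone = qone.

Lemma f_ezero : f ezero = qscal 0.
Proof.
have := fD (ezero_in_oE d) (ezero_in_oE d).
rewrite (_ : eadd ezero ezero = ezero); last by apply: qf_ext => /=; ring.
by case/quat_eqP => /= e0 e1 e2 e3; apply: quat_ext => /=; lra.
Qed.

Lemma f_natscale (n : nat) x : in_oE d x -> f (escale n%:R x) = qscale n%:R (f x).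
Proof.
move=> x_oE; elim: n => [|n IHn].
  rewrite (_ : escale 0%:R x = ezero) ?f_ezero; last by apply: qf_ext => /=; ring.
  by apply: quat_ext => /=; ring.
rewrite (_ : escale n.+1%:R x = eadd (escale n%:R x) x); last first.
  by apply: qf_ext; rewrite /= -addn1 natrD; ring.
rewrite fD ?IHn //; last exact: (in_oE_intscale n).
by apply: quat_ext; rewrite /= -addn1 natrD; ring.
Qed.

Lemma f_intscale (k : int) x : in_oE d x -> f (escale k%:~R x) = qscale k%:~R (f x).
Proof.
move=> x_oE; case: k => n; first exact: f_natscale.
have := fD (in_oE_intscale (Negz n) x_oE) (in_oE_intscale n.+1 x_oE).
rewrite (_ : eadd _ _ = ezero) ?f_ezero; last by apply: qf_ext; rewrite /= NegzE; ring.
move/esym/qadd_eq0 ->; rewrite [f _](f_natscale n.+1 x_oE) qscaleA NegzE.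
by congr qscale; rewrite intrN; ring.
Qed.

Lemma f_ecomb_omega (u v : int) :
  f (ecomb u%:~R v%:~R eone (omega d)) =
  qadd (qscal u%:~R) (qscale v%:~R (f (omega d))).
Proof.
have one_oE := eone_in_oE d; have omega_oE := in_oE_omega d.
by rewrite fD ?f_intscale ?f1 ?qscale_qone //; exact: in_oE_intscale.
Qed.

Lemma f_omega : exists2 t, iota t = f (omega d) & t = omega d \/ t = econj (omega d).
Proof.
have omega_oE := in_oE_omega d.
have [[t iota_t] _] := f_oE omega_oE; exists t => //.
case: d_imag => d_lt0 _; apply: (minpoly_root_eq d_lt0).
case: iota_emb => iota_inj [_ [iotaM [_ iota1]]]; apply: iota_inj.
have /in_oEE[/intrP[T eT] /intrP[N eN]] := omega_oE.
rewrite iotaM iota_t -fM // emul_sqr eT eN -intrN f_ecomb_omega.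
by rewrite intrN (iota_ecomb1 iota_emb) iota_t.
Qed.

Lemma f_eq_iota :
  (forall x, in_oE d x -> f x = iota x) \/
  (forall x, in_oE d x -> f x = iota (econj x)).
Proof.
case: d_imag => _ d_sqf.
have [t iota_t t_conj] := f_omega.
have f_t u v : f (ecomb u%:~R v%:~R eone (omega d)) = iota (ecomb u%:~R v%:~R eone t).
  by rewrite f_ecomb_omega (iota_ecomb1 iota_emb) iota_t.
case: t_conj => t_def; [left | right] => x /(in_oE_omegaP _ d_sqf)[u [v ->]];
  by rewrite f_t t_def ?econj_ecomb1.
Qed.

Lemma image_oEP z : (exists x, in_oE d x /\ iota x = z) <-> in_image iota z /\ O z.
Proof.
split=> [[x [x_oE <-]] | [z_img Oz]].
  split; first by exists x.
  case: f_eq_iota => f_iota; first by rewrite -f_iota //; case: (f_oE x_oE).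
  have xc_oE := econj_in_oE x_oE.
  by rewrite -[x]econjK -f_iota //; case: (f_oE xc_oE).
have [x [x_oE <-]] := f_onto z_img Oz.
case: f_eq_iota => f_iota; rewrite f_iota //.
  by exists x.
by exists (econj x); split; first exact: econj_in_oE.
Qed.

End OptimalEmbedding.

Definition sqrt_disc (d : int) : qf := QF 0 (2 * qim (omega d)).

Lemma enorm_sqrt_disc d : enorm d (sqrt_disc d) = - (4 * d%:~R * qim (omega d) ^+ 2).
Proof. by rewrite /enorm /=; ring. Qed.

Section TraceZeroLattice.
Variables (qa qb : rat) (O : quat -> Prop) (d : int) (iota : qf -> quat).
Hypothesis d_imag : imag_quadratic d.
Hypothesis iota_emb : is_embedding qa qb d iota.
Hypothesis iota_oE :
  forall z, (exists x, in_oE d x /\ iota x = z) <-> in_image iota z /\ O z.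

Let d_lt0 : d < 0. Proof. by case: d_imag. Qed.

(* [sqrt_disc d = 2 omega - Tr omega], which lies in [Z + 2 o_E]. *)
Lemma in_LO_sqrt_disc (n : int) : in_LO O (iota (escale n%:~R (sqrt_disc d))).
Proof.
have omega_oE := in_oE_omega d; have /in_oEE[/intrP[T eT] _] := omega_oE.
split; last by apply/(in_VD_iota d_lt0 iota_emb) => /=; rewrite mulr0.
exists (- n * T), (iota (escale n%:~R (omega d))); split.
  apply: (proj2 ((iota_oE _).1 _)).
  by exists (escale n%:~R (omega d)); split=> //; exact: in_oE_intscale.
rewrite -(iota_ecomb1 iota_emb); congr iota.
by apply: qf_ext; rewrite /= intrM intrN -eT /eTr; ring.
Qed.

Lemma image_in_LOP z :
  in_image iota z /\ in_LO O z <->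
  exists n : int, z = qscale n%:~R (iota (sqrt_disc d)).
Proof.
split=> [[[e <-] [[n [y [Oy e_ny]]] e_VD]] | [n ->]]; last first.
  rewrite -(iota_scale iota_emb).
  by split; [exists (escale n%:~R (sqrt_disc d)) | exact: in_LO_sqrt_disc].
have y_img : in_image iota y.
  exists (ecomb (- n%:~R / 2) (1 / 2) eone e).
  by rewrite (iota_ecomb1 iota_emb) e_ny; apply: quat_ext => /=; field.
have [x [x_oE iota_x]] := (iota_oE y).2 (conj y_img Oy).
have [u [v ex]] := (in_oE_omegaP x (proj2 d_imag)).1 x_oE.
have e_nx : e = ecomb n%:~R 2 eone x.
  case: iota_emb => iota_inj _; apply: iota_inj.
  by rewrite (iota_ecomb1 iota_emb) iota_x.
have /(in_VD_iota d_lt0 iota_emb) re_e := e_VD.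
exists v; rewrite -(iota_scale iota_emb); congr iota.
apply: qf_ext; rewrite /= ?re_e ?mulr0 //.
by rewrite e_nx ex /=; ring.
Qed.

End TraceZeroLattice.

Theorem lemma3p2 (qa qb : rat) (O : quat -> Prop) (d Delta : int)
    (iota : qf -> quat) :
  qa < 0 -> qb < 0 ->
  is_Eichler_order qa qb O ->
  imag_quadratic d ->
  is_fund_disc d Delta ->
  is_optimal_embedding qa qb d O iota ->
  (forall z, (exists x, in_oE d x /\ iota x = z) <-> (in_image iota z /\ O z)) /\
  (exists a, in_image iota a /\ in_VD a /\ qNm qa qb a = qscal (- Delta%:~R)) /\
  (forall a, in_image iota a -> in_VD a -> qNm qa qb a = qscal (- Delta%:~R) ->
     (in_image iota a /\ in_LO O a) /\
     (forall z, (in_image iota z /\ in_LO O z) <->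
                exists n : int, z = qscale n%:~R a)).
Proof.
move=> _ _ _ d_imag d_disc [iota_emb [f [f_oE [_ [f_onto [fD [fM f1]]]]]]].
have d_lt0 : d < 0 by case: d_imag.
have iota_oE := image_oEP d_imag iota_emb f_oE f_onto fD fM f1.
have LO_eq := image_in_LOP d_imag iota_emb iota_oE.
have Nm_sqrt_disc : qNm qa qb (iota (sqrt_disc d)) = qscal (- Delta%:~R).
  by rewrite (qNm_iota d_lt0 iota_emb) enorm_sqrt_disc (fund_disc_omega d_imag d_disc).
split; first exact: iota_oE.
split.
  exists (iota (sqrt_disc d)); split; first by exists (sqrt_disc d).
  by split; last exact: Nm_sqrt_disc; apply/(in_VD_iota d_lt0 iota_emb).
move=> a a_img a_VD; rewrite -Nm_sqrt_disc.
have re_sqrt_disc : qre (sqrt_disc d) = 0 by [].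
case/(in_VD_qNm_eq d_lt0 iota_emb re_sqrt_disc a_img a_VD) => s s2 ->.
split; first by apply/LO_eq; exists s.
move=> z; rewrite LO_eq; split=> -[n ->]; exists (n * s);
  by rewrite qscaleA -intrM // -mulrA -expr2 s2 mulr1.
Qed.
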